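(* Under the standing setup, let $u\in\widetilde X$. If $u\in\overline X$, then $\|\beta(u)-\beta(v)\|\le3\|u-v\|^{1/2}$ for all $v\in B(u,1)\cap\widetilde X$. If $u\notin\overline X$, set $r_u=\min\{1,\frac{\varepsilon\|u-u_{NN}\|}{480}\}$ and $\widetilde C_u=\frac1\varepsilon\max\{1200,\,480+128\|u-u_{NN}\|^{1/2}\}$; then \[\|\beta(u)-\beta(v)\|\le\widetilde C_u\|u-v\|^{1/2}\quad\forall\,v\in B(u,r_u)\cap\widetilde X.\]
   Context: Norms are Euclidean; $B(x,r)$ is the open ball; $\overline X$ is the closure. Standing setup: $X\subseteq\mathbb{R}^d$ has reach $\tau_X>0$, where $\tau_X=\sup\{t\ge0:\text{every }x\text{ with }d(x,X)<t\text{ has a unique closest point in }\overline X\}$; $\widetilde X=X+B(0,\tau_X/2)$; for $u\in\widetilde X$, $u_{NN}$ is the unique closest point to $u$ in $\overline X$, and it is a known fact that $\|u_{NN}-v_{NN}\|\le2\|u-v\|$ for all $u,v\in\widetilde X$. $\varepsilon\in(0,1)$. $S_X=\overline{\{(x-y)/\|x-y\|:x\ne y\in X\}}$. A linear $\Pi\colon\mathbb{R}^d\to\mathbb{R}^m$ provides $\eta$-convex hull distortion for $T\subseteq S^{d-1}$ if $|\,\|\Pi x\|-\|x\|\,|<\eta$ for all $x\in\operatorname{conv}(T)$. $\mathcal C=\{w_1,\ldots,w_\ell\}\subseteq S_X$ is finite with every $v\in S_X$ within distance $<\varepsilon/40$ of some $w_i$; $\Pi\in\mathbb{R}^{m\times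 d}$ provides $\frac{\varepsilon}{240}$-convex hull distortion for $S_X$. For $z\in\mathbb{R}^m$, $u\in\widetilde X$, $i=1,\ldots,\ell$: $\tilde g_i(z,u)=\langle z,\Pi w_i\rangle-\langle u-u_{NN},w_i\rangle-\frac{\varepsilon}{30}\|u-u_{NN}\|$, $\tilde g_{\ell+i}(z,u)=\langle u-u_{NN},w_i\rangle-\langle z,\Pi w_i\rangle-\frac{\varepsilon}{30}\|u-u_{NN}\|$; $\widetilde F_u=\{z:\tilde g_i(z,u)\le0,\ i=1,\ldots,2\ell\}$ (nonempty, closed, convex); $\beta(u)=\arg\min_{z\in\widetilde F_u}\|z\|$. *)

From HB Require Import structures.
From mathcomp Require Import all_boot all_order all_algebra.
From mathcomp Require Import classical_sets reals constructive_ereal ereal.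
Set Implicit Arguments. Unset Strict Implicit. Unset Printing Implicit Defensive.
Import Order.TTheory GRing.Theory Num.Theory.
Local Open Scope classical_set_scope.
Local Open Scope ring_scope.

Section Defs.
Variable R : realType.

Definition edot n (x y : 'rV[R]_n) : R := \sum_(i < n) x 0 i * y 0 i.
Definition enorm n (x : 'rV[R]_n) : R := Num.sqrt (edot x x).

Definition eclosure n (A : set 'rV[R]_n) : set 'rV[R]_n :=
  [set p | forall e : R, 0 < e -> exists2 a, A a & enorm (a - p) < e].

Definition dist_set n (X : set 'rV[R]_n) (x : 'rV[R]_n) : R :=
  inf [set enorm (x - y) | y in X].

Definition is_closest n (X : set 'rV[R]_n) (x p : 'rV[R]_n) : Prop :=
  eclosure X p /\ forall q, eclosure X q -> enorm (x - p) <= enorm (x - q).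

Definition unique_closest n (X : set 'rV[R]_n) (x : 'rV[R]_n) : Prop :=
  exists p, is_closest X x p /\ forall q, is_closest X x q -> q = p.

Definition reach n (X : set 'rV[R]_n) : \bar R :=
  ereal_sup [set t%:E | t in [set t : R | 0 <= t /\
     forall x, dist_set X x < t -> unique_closest X x]].

(* X~ = X + B(0, tau_X/2) (open ball), i.e. points at distance < tau_X/2
   from some point of X; written as 2 ||u - x|| < tau_X *)
Definition Xtilde n (X : set 'rV[R]_n) : set 'rV[R]_n :=
  [set u | exists2 x, X x & ((2 * enorm (u - x))%:E < reach X)%E].

Definition nn n (X : set 'rV[R]_n) (u : 'rV[R]_n) : 'rV[R]_n :=
  xget 0 (is_closest X u).

Definition secants n (X : set 'rV[R]_n) : set 'rV[R]_n :=
  eclosure [set v | exists x y, [/\ X x, X y, x <> y & v = (enorm (x - y))^-1 *: (x - y)]].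

Definition conv n (T : set 'rV[R]_n) : set 'rV[R]_n :=
  [set x | exists (k : nat) (t : 'I_k -> 'rV[R]_n) (lam : 'I_k -> R),
     [/\ forall j, T (t j), forall j, 0 <= lam j, \sum_(j < k) lam j = 1
       & x = \sum_(j < k) lam j *: t j]].

Definition applyPi d m (Pi : 'M[R]_(d, m)) (x : 'rV[R]_d) : 'rV[R]_m := x *m Pi.

Definition convex_hull_distortion d m (Pi : 'M[R]_(d, m)) (eta : R)
  (T : set 'rV[R]_d) : Prop :=
  forall x, conv T x -> `| enorm (applyPi Pi x) - enorm x | < eta.

Definition gtilde d m (X : set 'rV[R]_d) (Pi : 'M[R]_(d, m)) (eps : R)
  l (w : 'I_l -> 'rV[R]_d) (i : 'I_l) (upper : bool)
  (z : 'rV[R]_m) (u : 'rV[R]_d) : R :=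
  if ~~ upper then
    edot z (applyPi Pi (w i)) - edot (u - nn X u) (w i) - eps / 30 * enorm (u - nn X u)
  else
    edot (u - nn X u) (w i) - edot z (applyPi Pi (w i)) - eps / 30 * enorm (u - nn X u).

Definition Ftilde d m (X : set 'rV[R]_d) (Pi : 'M[R]_(d, m)) (eps : R)
  l (w : 'I_l -> 'rV[R]_d) (u : 'rV[R]_d) : set 'rV[R]_m :=
  [set z | forall (i : 'I_l) (b : bool), gtilde X Pi eps w i b z u <= 0].

Definition beta d m (X : set 'rV[R]_d) (Pi : 'M[R]_(d, m)) (eps : R)
  l (w : 'I_l -> 'rV[R]_d) (u : 'rV[R]_d) : 'rV[R]_m :=
  xget 0 [set z | Ftilde X Pi eps w u z /\
                  forall z', Ftilde X Pi eps w u z' -> enorm z <= enorm z'].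

End Defs.

(* [beta u] is the minimum-norm point of [F~_u], a system of slabs of half-width
   eps/30 * |t_u| centred at t_u = u - u_NN.  Convex-hull distortion of [Pi] gives a
   point of norm at most |t_u| in the eight times thinner slabs: otherwise the
   minimiser of a soft-threshold penalty over that ball would produce a combination
   of the w_i whose norm [Pi] shrinks by more than allowed.  For v close to u, moving
   [beta u] towards that point by a fraction of order |u - v| / (eps |t_u|) lands in
   [F~_v], and symmetrically.  The variational inequality of minimum-norm points of
   convex sets turns these two displacements of order |u - v| / eps into
   |beta u - beta v|^2 = O(|t_u| |u - v| / eps^2).  On the closure t_u = 0, so
   [beta u] = 0 and |beta v| <= |t_v| <= |u - v|. *)

From HB Require Import structures.
From mathcomp Require Import all_boot all_order all_algebra.
From mathcomp Require Import classical_sets reals constructive_ereal ereal.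
From mathcomp Require Import topology normedtype realfun derive.
From mathcomp Require Import ring lra.
Import Order.TTheory GRing.Theory Num.Theory.
Import numFieldNormedType.Exports.
Local Open Scope classical_set_scope.
Local Open Scope ring_scope.
Set Implicit Arguments. Unset Strict Implicit. Unset Printing Implicit Defensive.

Section Euclidean.
Variables (R : realType) (n : nat).
Implicit Types (x y z : 'rV[R]_n) (a : R).

Lemma edotC x y : edot x y = edot y x.
Proof. by apply: eq_bigr => i _; rewrite mulrC. Qed.

Lemma edotDl x y z : edot (x + y) z = edot x z + edot y z.
Proof. by rewrite /edot -big_split; apply: eq_bigr => i _; rewrite mxE mulrDl. Qed.

Lemma edotZl a x y : edot (a *: x) y = a * edot x y.
Proof. by rewrite /edot mulr_sumr; apply: eq_bigr => i _; rewrite mxE mulrA. Qed.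

Lemma edotNl x y : edot (- x) y = - edot x y.
Proof. by rewrite -scaleN1r edotZl mulN1r. Qed.

Lemma edotBl x y z : edot (x - y) z = edot x z - edot y z.
Proof. by rewrite edotDl edotNl. Qed.

Lemma edotDr x y z : edot z (x + y) = edot z x + edot z y.
Proof. by rewrite edotC edotDl !(edotC z). Qed.

Lemma edotZr a x y : edot y (a *: x) = a * edot y x.
Proof. by rewrite edotC edotZl edotC. Qed.

Lemma edot0l x : edot 0 x = 0.
Proof. by rewrite /edot big1 // => i _; rewrite mxE mul0r. Qed.

Lemma edot_sumr k (f : 'I_k -> 'rV[R]_n) y :
  edot y (\sum_(j < k) f j) = \sum_(j < k) edot y (f j).
Proof.
elim: k f => [|k IH] f; first by rewrite !big_ord0 edotC edot0l.
by rewrite !big_ord_recr /= edotDr IH.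
Qed.

Lemma edot_ge0 x : 0 <= edot x x.
Proof. by apply: sumr_ge0 => i _; rewrite -expr2 sqr_ge0. Qed.

Lemma enorm_ge0 x : 0 <= enorm x.
Proof. exact: sqrtr_ge0. Qed.

Lemma enorm_sqr x : enorm x ^+ 2 = edot x x.
Proof. by rewrite sqr_sqrtr // edot_ge0. Qed.

Lemma enorm0 : enorm (0 : 'rV[R]_n) = 0.
Proof. by rewrite /enorm edot0l sqrtr0. Qed.

Lemma enorm_eq0 x : enorm x = 0 -> x = 0.
Proof.
move=> /eqP; rewrite sqrtr_eq0 => x0; apply/matrixP => i j; rewrite mxE ord1.
have sq_ge0 (k : 'I_n) : xpredT k -> 0 <= x 0 k * x 0 k by rewrite -expr2 sqr_ge0.
have xx0 : edot x x = 0 by apply/eqP; rewrite eq_le x0 edot_ge0.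
have /eqP := (psumr_eq0P sq_ge0 xx0) j isT.
by rewrite mulf_eq0 orbb => /eqP.
Qed.

Lemma enorm_gt0 x : x != 0 -> 0 < enorm x.
Proof.
by move=> x0; rewrite lt0r enorm_ge0 andbT; apply: contra_neq x0; exact: enorm_eq0.
Qed.

Lemma enormZ a x : enorm (a *: x) = `|a| * enorm x.
Proof. by rewrite /enorm edotZl edotZr mulrA -expr2 sqrtrM ?sqr_ge0 // sqrtr_sqr. Qed.

Lemma enormN x : enorm (- x) = enorm x.
Proof. by rewrite -scaleN1r enormZ normrN normr1 mul1r. Qed.

Lemma enormBC x y : enorm (x - y) = enorm (y - x).
Proof. by rewrite -enormN opprB. Qed.

Lemma enormD_sqr x y :
  enorm (x + y) ^+ 2 = enorm x ^+ 2 + 2 * edot x y + enorm y ^+ 2.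
Proof. by rewrite !enorm_sqr edotDl !edotDr (edotC y x); ring. Qed.

Lemma cauchy_schwarz x y : `|edot x y| <= enorm x * enorm y.
Proof.
have [->|x0] := eqVneq x 0; first by rewrite edot0l enorm0 mul0r normr0.
have [->|y0] := eqVneq y 0; first by rewrite edotC edot0l enorm0 mulr0 normr0.
have nx := enorm_gt0 x0; have ny := enorm_gt0 y0.
have sqD (b : R) : 0 <= enorm (enorm y *: x + b *: y) ^+ 2 by exact: sqr_ge0.
have := sqD (enorm x); have := sqD (- enorm x).
rewrite !enormD_sqr !enormZ !edotZl !edotZr normrN !(ger0_norm (enorm_ge0 _)).
rewrite ler_norml; move: (edot x y) (enorm x) (enorm y) nx ny => c p q hp hq h1 h2.
have hpq : 0 < p * q by exact: mulr_gt0.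
rewrite !expr2 in h1 h2; apply/andP; split; nra.
Qed.

Lemma ler_enormD x y : enorm (x + y) <= enorm x + enorm y.
Proof.
rewrite -ler_sqr ?nnegrE ?addr_ge0 ?enorm_ge0 // enormD_sqr sqrrD.
have := le_trans (ler_norm _) (cauchy_schwarz x y); lra.
Qed.

Lemma ler_enormB x y : enorm (x - y) <= enorm x + enorm y.
Proof. by rewrite -(enormN y) ler_enormD. Qed.

Lemma lerB_enorm x y : enorm x - enorm y <= enorm (x - y).
Proof. by rewrite lerBlDr -{1}(subrK y x) ler_enormD. Qed.

End Euclidean.

Lemma closed_sublevel (R : realType) (T : topologicalType) (f : T -> R) (M : R) :
  continuous f -> closed [set z | f z <= M].
Proof. by move=> cf; have := (continuous_closedP f).1 cf _ (@closed_le _ M). Qed.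

Lemma small_perturbation_ge0 (R : realType) (a b : R) :
  (forall t, 0 < t <= 1 -> 0 <= a + t * b) -> 0 <= a.
Proof.
move=> H; rewrite leNgt; apply/negP => a_lt0.
have ba_gt0 : 0 < `|b| - a by have := normr_ge0 b; lra.
pose t := - a / (`|b| - a).
have t_gt0 : 0 < t by rewrite divr_gt0 // oppr_gt0.
have t_le1 : t <= 1 by rewrite ler_pdivrMr // mul1r; have := normr_ge0 b; lra.
have tE : t * (`|b| - a) = - a by rewrite mulfVK // gt_eqF.
have := H t; rewrite t_gt0 t_le1 => /(_ isT).
have : t * b <= t * `|b| by rewrite ler_pM2l // ler_norm.
nra.
Qed.

Section MinNorm.
Variables (R : realType) (n : nat).
Implicit Types (C : set 'rV[R]_n) (x y z b p : 'rV[R]_n).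

Lemma continuous_edotl (a : 'rV[R]_n) : continuous (fun z : 'rV[R]_n => edot z a).
Proof.
apply: continuous_big => [|i _ z]; first exact: add_continuous.
by apply: continuousM; [exact: coord_continuous | exact: cst_continuous].
Qed.

Lemma continuous_enorm : continuous (fun z : 'rV[R]_n => enorm z).
Proof.
have cdot : continuous (fun z : 'rV[R]_n => edot z z).
  apply: continuous_big => [|i _ z]; first exact: add_continuous.
  by apply: continuousM; exact: coord_continuous.
by move=> z; exact: continuous_comp (cdot z) (@sqrt_continuous R _).
Qed.

Lemma mx_norm_le_enorm x : `|x| <= enorm x.
Proof.
rewrite [`|x|]mx_normrE; apply: bigmax_le => [|[i j] _ /=]; first exact: enorm_ge0.
rewrite ord1 -ler_sqr ?nnegrE ?enorm_ge0 // real_normK ?num_real // enorm_sqr.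
rewrite /edot (bigD1 j) //= expr2 lerDl.
by apply: sumr_ge0 => k _; rewrite -expr2 sqr_ge0.
Qed.

Lemma bounded_closed_argmin (f : 'rV[R]_n -> R) C (M : R) :
  continuous f -> closed C -> (forall z, C z -> enorm z <= M) -> C !=set0 ->
  exists2 c, C c & forall z, C z -> f c <= f z.
Proof.
move=> cf cC bC C0.
have cpt : compact C.
  apply: bounded_closed_compact => //; exists M; split; first exact: num_real.
  move=> K MK x Cx /=.
  exact: le_trans (mx_norm_le_enorm x) (le_trans (bC _ Cx) (ltW MK)).
have [c Cc cmin] := EVT_min_rV C0 cpt (continuous_subspaceT cf).
by exists c => [|z Cz]; [rewrite inE in Cc | apply: cmin; rewrite inE].
Qed.

Definition is_min_norm C b := C b /\ forall z, C z -> enorm b <= enorm z.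

Lemma exists_min_norm C z0 : closed C -> C z0 -> exists b, is_min_norm C b.
Proof.
move=> cC Cz0; pose Cb := [set z | enorm z <= enorm z0] `&` C.
have cCb : closed Cb by apply: closedI => //; exact: closed_sublevel continuous_enorm.
have [b [bz0 Cb'] bmin] := bounded_closed_argmin continuous_enorm cCb (fun z => fst)
  (ex_intro _ z0 (conj (lexx _) Cz0)).
exists b; split => // z Cz; have [zz0|z0z] := lerP (enorm z) (enorm z0).
- exact: bmin.
- exact: le_trans bz0 (ltW z0z).
Qed.

Definition convex_rV C :=
  forall x y (t : R), C x -> C y -> 0 <= t <= 1 -> C (x + t *: (y - x)).

Lemma closed_ball_convex (M : R) : convex_rV [set z | enorm z <= M].
Proof.
move=> x y t /= xM yM /andP[t0 t1].
have -> : x + t *: (y - x) = (1 - t) *: x + t *: y.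
  by rewrite scalerBr scalerBl scale1r addrA addrAC.
apply: le_trans (ler_enormD _ _) _; rewrite !enormZ !ger0_norm; nra.
Qed.

Lemma min_norm_variational C b p : convex_rV C -> is_min_norm C b -> C p ->
  enorm (p - b) ^+ 2 <= enorm p ^+ 2 - enorm b ^+ 2.
Proof.
move=> convC [Cb bmin] Cp.
have slope_ge0 : 0 <= 2 * edot b (p - b).
  apply: (@small_perturbation_ge0 _ _ (enorm (p - b) ^+ 2)) => t /andP[t0 t1].
  have t01 : 0 <= t <= 1 by rewrite (ltW t0) t1.
  have : enorm b ^+ 2 <= enorm (b + t *: (p - b)) ^+ 2.
    by rewrite ler_sqr ?nnegrE ?enorm_ge0 //; exact/bmin/convC.
  rewrite enormD_sqr edotZr enormZ gtr0_norm // exprMn => h.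
  rewrite -(pmulr_rge0 _ t0).
  have -> : forall e M, t * (2 * e + t * M) = 2 * (t * e) + t ^+ 2 * M.
    by move=> e M; rewrite expr2; ring.
  lra.
have := enormD_sqr b (p - b); rewrite addrC subrK; lra.
Qed.

Lemma min_norm_stable C1 C2 b1 b2 p q (D : R) :
  convex_rV C2 -> is_min_norm C1 b1 -> is_min_norm C2 b2 -> C2 p -> C1 q ->
  enorm (p - b1) <= D -> enorm (q - b2) <= D ->
  enorm (b1 - b2) ^+ 2 <= 10 * D ^+ 2 + 8 * D * enorm b1.
Proof.
move=> convC2 [_ b1min] b2_min C2p C1q pb1 qb2.
have Esqr := min_norm_variational convC2 b2_min C2p.
have [_ b2min] := b2_min.
have D0 : 0 <= D := le_trans (enorm_ge0 _) pb1.
have pb : enorm p <= enorm b1 + D.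
  by apply: le_trans (lerD (lexx _) pb1); rewrite -{1}(subrK b1 p) addrC ler_enormD.
have b1b2 : enorm b1 <= enorm b2 + D.
  apply: le_trans (b1min _ C1q) _.
  by apply: le_trans (lerD (lexx _) qb2); rewrite -{1}(subrK b2 q) addrC ler_enormD.
have b2p := b2min _ C2p.
have N_le : enorm (b1 - b2) <= D + enorm (p - b2).
  apply: le_trans (lerD pb1 (lexx _)).
  by have := ler_enormD (b1 - p) (p - b2); rewrite addrA subrK enormBC.
have E_sqr : enorm (p - b2) ^+ 2 <= 4 * D * (enorm b1 + D).
  apply: le_trans Esqr _; rewrite subr_sqr.
  apply: le_trans (ler_pM _ _ (_ : _ <= 2 * D) (_ : _ <= 2 * (enorm b1 + D))) _;
    rewrite ?subr_ge0 ?addr_ge0 ?enorm_ge0 //; lra.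
have N_sqr : enorm (b1 - b2) ^+ 2 <= (D + enorm (p - b2)) ^+ 2.
  by rewrite ler_sqr ?nnegrE ?addr_ge0 ?enorm_ge0.
have := sqr_ge0 (D - enorm (p - b2)).
rewrite sqrrD sqrrB in N_sqr *; lra.
Qed.

End MinNorm.

Definition soft_thr (R : realType) (eta r : R) : R :=
  r - Num.max (- eta) (Num.min eta r).

Section SoftThreshold.
Variables (R : realType) (eta : R).

Lemma soft_thrP r : 0 <= eta ->
  [\/ soft_thr eta r = r - eta /\ eta <= r,
      soft_thr eta r = 0 /\ `|r| <= eta |
      soft_thr eta r = r + eta /\ r <= - eta].
Proof.
move=> eta_ge0; rewrite /soft_thr; have [er|re] := lerP eta r.
  by apply: Or31; rewrite max_r // (le_trans _ eta_ge0) // oppr_le0.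
have [rne|ner] := lerP r (- eta).
  by apply: Or33; split => //; lra.
by apply: Or32; rewrite subrr ler_norml; split => //; apply/andP; split; lra.
Qed.

Lemma soft_thr_eq0 r : 0 <= eta -> soft_thr eta r = 0 -> `|r| <= eta.
Proof.
move=> eta_ge0; case: (soft_thrP r eta_ge0) => [[-> h]|[_ //]|[-> h]] h0;
  by rewrite ler_norml; apply/andP; split; lra.
Qed.

Lemma soft_thr_mulr r : 0 <= eta ->
  soft_thr eta r * r = soft_thr eta r ^+ 2 + eta * `|soft_thr eta r|.
Proof.
move=> eta_ge0; case: (soft_thrP r eta_ge0) => [[-> h]|[-> _]|[-> h]].
- by rewrite ger0_norm; [rewrite expr2; ring | lra].
- by rewrite normr0 expr2 !mul0r mulr0 addr0.
- by rewrite ler0_norm; [rewrite expr2; ring | lra].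
Qed.

Lemma soft_thr_sqrD r h : 0 <= eta ->
  soft_thr eta (r + h) ^+ 2 <= (soft_thr eta r + h) ^+ 2.
Proof.
move=> eta_ge0; rewrite !expr2.
case: (soft_thrP r eta_ge0) => [[-> h1]|[-> h1]|[-> h1]];
case: (soft_thrP (r + h) eta_ge0) => [[-> h3]|[-> h3]|[-> h3]];
  rewrite ?ler_norml in h1 h3 *;
  try case/andP: h1 => h1 h2; try case/andP: h3 => h3 h4; nra.
Qed.

Lemma continuous_soft_thr : continuous (soft_thr eta).
Proof.
move=> r; have cclamp : {for r, continuous (fun r : R => Num.max (- eta) (Num.min eta r))}.
  apply: continuous_max; first exact: cst_continuous.
  by apply: continuous_min; [exact: cst_continuous | exact: cvg_id].
by have := continuousB (@cvg_id _ (nbhs r)) cclamp.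
Qed.

End SoftThreshold.

Section Penalty.
Variables (R : realType) (m l : nat) (a : 'I_l -> 'rV[R]_m) (c : 'I_l -> R) (eta : R).

Definition resid (z : 'rV[R]_m) i := edot z (a i) - c i.

Definition penalty (z : 'rV[R]_m) := \sum_(i < l) soft_thr eta (resid z i) ^+ 2.

Lemma continuous_penalty : continuous penalty.
Proof.
apply: continuous_big => [|i _ z]; first exact: add_continuous.
have cres : {for z, continuous (resid ^~ i)}.
  by apply: continuousB; [exact: continuous_edotl | exact: cst_continuous].
have cthr := continuous_comp cres (@continuous_soft_thr R eta _).
exact: continuous_comp cthr (@exprn_continuous R 2 _).
Qed.

Lemma penalty_first_order C zs z : 0 <= eta -> convex_rV C -> C zs -> C z ->
  (forall z', C z' -> penalty zs <= penalty z') ->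
  0 <= edot (z - zs) (\sum_(i < l) soft_thr eta (resid zs i) *: a i).
Proof.
move=> eta_ge0 convC Czs Cz zs_min; pose y i := soft_thr eta (resid zs i).
pose h i := edot (z - zs) (a i).
have -> : edot (z - zs) (\sum_(i < l) y i *: a i) = \sum_(i < l) y i * h i.
  by rewrite edot_sumr; apply: eq_bigr => i _; rewrite edotZr.
suff : 0 <= 2 * \sum_(i < l) y i * h i by lra.
apply: (@small_perturbation_ge0 _ _ (\sum_(i < l) h i ^+ 2)) => t /andP[t0 t1].
have t01 : 0 <= t <= 1 by rewrite (ltW t0) t1.
have := zs_min _ (convC _ _ _ Czs Cz t01).
have resid_step i : resid (zs + t *: (z - zs)) i = resid zs i + t * h i.
  by rewrite /resid /h edotDl edotZl addrAC.
have step : penalty (zs + t *: (z - zs)) <= \sum_(i < l) (y i + t * h i) ^+ 2.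
  by apply: ler_sum => i _; rewrite resid_step soft_thr_sqrD.
have expand : \sum_(i < l) (y i + t * h i) ^+ 2 =
    penalty zs + t * (2 * \sum_(i < l) y i * h i + t * \sum_(i < l) h i ^+ 2).
  rewrite mulrDr !mulr_sumr -!big_split; apply: eq_bigr => i _ /=; rewrite /y; ring.
rewrite -(pmulr_rge0 _ t0); lra.
Qed.

End Penalty.

Lemma exists_antipode (R : realType) m (T : R) (v : 'rV[R]_m) : 0 <= T ->
  exists2 z, enorm z <= T & edot z v = - (T * enorm v).
Proof.
move=> T0; have [->|v0] := eqVneq v 0.
  by exists 0; rewrite ?enorm0 ?edot0l ?mulr0 ?oppr0.
have nv := enorm_gt0 v0.
exists (- (T / enorm v) *: v).
  by rewrite enormZ normrN ger0_norm ?divr_ge0 ?enorm_ge0 // divfK ?gt_eqF.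
by rewrite edotZl -enorm_sqr expr2 mulNr mulrA divfK ?gt_eqF.
Qed.

Section Distortion.
Variables (R : realType) (d m l : nat) (S : set 'rV[R]_d) (w : 'I_l -> 'rV[R]_d).
Hypothesis S_sym : forall v, S v -> S (- v).
Hypothesis S_w : forall i, S (w i).

Lemma conv_normalized_comb (y : 'I_l -> R) : 0 < \sum_(j < l) `|y j| ->
  conv S ((\sum_(j < l) `|y j|)^-1 *: \sum_(j < l) y j *: w j).
Proof.
set s := \sum_(j < l) `|y j|; move=> s_gt0.
exists l, (fun j => if 0 <= y j then w j else - w j), (fun j => `|y j| / s); split.
- by move=> j; case: ifP => _; [exact: S_w | exact/S_sym/S_w].
- by move=> j; rewrite divr_ge0 // ltW.
- by rewrite -mulr_suml mulfV // gt_eqF.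
- rewrite scaler_sumr; apply: eq_bigr => j _; rewrite scalerA.
  case: ifP => y0; first by rewrite ger0_norm // mulrC.
  by rewrite ltr0_norm ?ltNge ?y0 // scalerN -scaleNr mulNr opprK mulrC.
Qed.

Lemma hull_distortion_comb (Pi : 'M[R]_(d, m)) (delta : R) (y : 'I_l -> R) :
  convex_hull_distortion Pi delta S ->
  enorm (\sum_(j < l) y j *: w j) - (\sum_(j < l) `|y j|) * delta
    <= enorm (applyPi Pi (\sum_(j < l) y j *: w j)).
Proof.
move=> HPi; set s := \sum_(j < l) `|y j|; set x := \sum_(j < l) y j *: w j.
have [s0|s_gt0] := eqVneq s 0.
  have y0 j : y j = 0.
    apply/normr0_eq0.
    exact: (@psumr_eq0P _ _ xpredT (fun i => `|y i|) (fun i _ => normr_ge0 _) s0 j isT).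
  have x0 : x = 0 by apply: big1 => j _; rewrite y0 scale0r.
  by rewrite x0 s0 mul0r subr0 /applyPi mul0mx !enorm0.
have {s_gt0}s_gt0 : 0 < s by rewrite lt0r s_gt0 sumr_ge0.
have := HPi _ (conv_normalized_comb s_gt0).
have s_inv_gt0 : 0 < s^-1 by rewrite invr_gt0.
rewrite /applyPi -scalemxAl !enormZ -/s -/x !(gtr0_norm s_inv_gt0).
rewrite ltr_norml => /andP[h _].
have : s * - delta < s * (s^-1 * enorm (x *m Pi) - s^-1 * enorm x) by rewrite ltr_pM2l.
by rewrite mulrBr !mulrA mulfV ?gt_eqF // !mul1r; lra.
Qed.

End Distortion.

Section Slab.
Variables (R : realType) (m l : nat) (a : 'I_l -> 'rV[R]_m).

Definition slab (c : 'I_l -> R) (k : R) : set 'rV[R]_m :=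
  [set z | forall i, `|edot z (a i) - c i| <= k].

Lemma closed_slab c k : closed (slab c k).
Proof.
have -> : slab c k = \bigcap_(i in [set: 'I_l]) [set z | `|resid a c z i| <= k].
  by apply/seteqP; split => [z zk i _ | z zk i]; [exact: zk | exact: zk].
apply: closed_bigI => i _; apply: closed_sublevel => z.
have cres : {for z, continuous (resid a c ^~ i)}.
  by apply: continuousB; [exact: continuous_edotl | exact: cst_continuous].
exact: continuous_comp cres (@norm_continuous _ R^o _).
Qed.

Lemma slab_mix c c' (K kappa K' e t : R) b z :
  slab c K b -> slab c kappa z -> (forall i, `|c' i - c i| <= e) -> 0 <= t <= 1 ->
  (1 - t) * K + t * kappa + e <= K' -> slab c' K' (b + t *: (z - b)).
Proof.
move=> bK zk cc' /andP[t0 t1] KK' i; rewrite edotDl edotZl edotBl.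
have := bK i; have := zk i; have := cc' i.
move: (edot b (a i)) (edot z (a i)) (c i) (c' i) => p q ci ci'.
rewrite !ler_norml => /andP[h1 h2] /andP[h3 h4] /andP[h5 h6].
have u1 : 0 <= 1 - t by lra.
apply/andP; split; nra.
Qed.

Lemma slab_convex c k : convex_rV (slab c k).
Proof.
move=> x y t xk yk t01; apply: (slab_mix (e := 0)) xk yk _ t01 _ => [i|].
  by rewrite subrr normr0.
by rewrite addr0 mulrBl mul1r subrK.
Qed.

End Slab.

Lemma exists_slack_point (R : realType) d m l (S : set 'rV[R]_d)
    (w : 'I_l -> 'rV[R]_d) (Pi : 'M[R]_(d, m)) (delta : R) (t : 'rV[R]_d) :
  (forall v, S v -> S (- v)) -> (forall i, S (w i)) ->
  convex_hull_distortion Pi delta S -> 0 <= delta ->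
  exists2 z, enorm z <= enorm t &
    slab (fun i => applyPi Pi (w i)) (fun i => edot t (w i)) (enorm t * delta) z.
Proof.
move=> S_sym S_w HPi delta0; set T := enorm t; set eta := T * delta.
pose a i := applyPi Pi (w i); pose c i := edot t (w i).
have eta0 : 0 <= eta by rewrite mulr_ge0 ?enorm_ge0.
have ball0 : [set z : 'rV[R]_m | enorm z <= T] !=set0.
  by exists 0; rewrite /= enorm0 enorm_ge0.
have [zs zsT zs_min] := bounded_closed_argmin (@continuous_penalty R m l a c eta)
  (@closed_sublevel R _ _ T (@continuous_enorm R m)) (fun z zT => zT) ball0.
pose y i := soft_thr eta (resid a c zs i); pose x := \sum_(i < l) y i *: w i.
have Pix : applyPi Pi x = \sum_(i < l) y i *: a i.
  by rewrite /applyPi mulmx_suml; apply: eq_bigr => i _; rewrite -scalemxAl.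
have [z zT z_anti] := exists_antipode (applyPi Pi x) (enorm_ge0 t).
have first_order := penalty_first_order eta0 (@closed_ball_convex R m T) zsT zT zs_min.
rewrite -Pix edotBl z_anti in first_order.
have yr_penalty : \sum_(i < l) y i * resid a c zs i =
    penalty a c eta zs + eta * \sum_(i < l) `|y i|.
  by rewrite mulr_sumr -big_split; apply: eq_bigr => i _; rewrite soft_thr_mulr.
have yr_dot : \sum_(i < l) y i * resid a c zs i = edot zs (applyPi Pi x) - edot t x.
  rewrite Pix !edot_sumr -sumrB; apply: eq_bigr => i _.
  by rewrite !edotZr /resid /c; ring.
have cs : - (T * enorm x) <= edot t x.
  by have := cauchy_schwarz t x; rewrite ler_norml => /andP[].
(* At the minimiser the thresholded residuals [y] satisfy
   penalty + eta * sum |y| = <zs, Pi x> - <t, x> <= T (|x| - |Pi x|) <= eta * sum |y|. *)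
have := hull_distortion_comb S_sym S_w y HPi; rewrite -/x => dist.
have : T * (enorm x - enorm (applyPi Pi x)) <= T * ((\sum_(i < l) `|y i|) * delta).
  by rewrite ler_wpM2l ?enorm_ge0 //; lra.
have pen_ge0 : 0 <= penalty a c eta zs by apply: sumr_ge0 => i _; exact: sqr_ge0.
rewrite /eta in yr_penalty pen_ge0 * => Tdist.
have pen0 : penalty a c (T * delta) zs = 0.
  by apply/eqP; rewrite eq_le pen_ge0 andbT; move: first_order; rewrite -/T; lra.
exists zs => // i; apply: (soft_thr_eq0 (r := resid a c zs i) eta0).
apply/eqP; rewrite -sqrf_eq0; apply/eqP.
exact: (@psumr_eq0P _ _ xpredT (fun i => soft_thr _ (resid a c zs i) ^+ 2)
  (fun i _ => sqr_ge0 _) pen0 i isT).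
Qed.

Section Secants.
Variables (R : realType) (d : nat) (X : set 'rV[R]_d).

Lemma secant_enorm_le1 v : secants X v -> enorm v <= 1.
Proof.
move=> Xv; rewrite leNgt; apply/negP => v_gt1.
have [_ [x [y [_ _ xy ->]]] close] := Xv _ (ltac:(rewrite subr_gt0 //) : 0 < enorm v - 1).
have xy_gt0 : 0 < enorm (x - y) by apply: enorm_gt0; rewrite subr_eq0; exact/eqP.
move: close; rewrite enormBC; set b := _ *: (x - y).
have := ler_enormD (v - b) b; rewrite subrK.
by rewrite enormZ gtr0_norm ?invr_gt0 // mulVf ?gt_eqF //; lra.
Qed.

Lemma secantsN v : secants X v -> secants X (- v).
Proof.
move=> Xv e e_gt0; have [_ [x [y [Xx Xy xy ->]]] close] := Xv _ e_gt0.
exists ((enorm (y - x))^-1 *: (y - x)); first by exists y, x; split => //; exact: nesym.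
by rewrite (enormBC y) -(opprB x y) scalerN -opprD enormN.
Qed.

Lemma abs_edot_secant_le e v : secants X v -> `|edot e v| <= enorm e.
Proof.
move=> Xv; apply: le_trans (cauchy_schwarz e v) _.
by rewrite ler_piMr ?enorm_ge0 ?secant_enorm_le1.
Qed.

End Secants.

Lemma nn_closest (R : realType) d (X : set 'rV[R]_d) u :
  Xtilde X u -> is_closest X u (nn X u).
Proof.
move=> [x Xx ux]; have [_ [t [t0 Xt] <-] tx] := ereal_sup_gt ux.
rewrite lte_fin in tx.
have dist_le : dist_set X u <= enorm (u - x).
  by apply: ge_inf; [exists 0 => _ [y _ <-]; exact: enorm_ge0 | exists x].
have [p [closest_p _]] : unique_closest X u by apply: Xt; have := enorm_ge0 (u - x); lra.
by apply: xgetPex; exists p.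
Qed.

Lemma perturbation_budget (R : realType) (eps T Tv e lam : R) :
  0 < eps -> eps < 1 -> 0 <= e -> lam * (eps * T) = 50 * e -> T - e <= Tv ->
  (1 - lam) * (eps / 30 * T) + lam * (T * (eps / 240)) + e <= eps / 30 * Tv.
Proof.
move=> eps_gt0 eps_lt1 e0 lamE TvT.
have := ler_wpM2l (ltW eps_gt0) TvT; have : eps * e <= e by rewrite ler_piMl // ltW.
lra.
Qed.

Section Beta.
Variables (R : realType) (d m l : nat) (X : set 'rV[R]_d) (Pi : 'M[R]_(d, m))
  (eps : R) (w : 'I_l -> 'rV[R]_d).
Hypothesis X_w : forall i, secants X (w i).
Hypothesis Pi_dist : convex_hull_distortion Pi (eps / 240) (secants X).

Local Notation a := (fun i => applyPi Pi (w i)).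
Local Notation t u := (u - nn X u).
Local Notation F := (Ftilde X Pi eps w).
Local Notation beta := (beta X Pi eps w).

Lemma FtildeE u : F u = slab a (fun i => edot (t u) (w i)) (eps / 30 * enorm (t u)).
Proof.
apply/seteqP; split => z /= Fz i.
- have := Fz i false; have := Fz i true; rewrite /gtilde /= => h1 h2.
  by rewrite ler_norml; apply/andP; split; lra.
- move=> b; have := Fz i; rewrite ler_norml /gtilde => /andP[h1 h2].
  by case: b => /=; lra.
Qed.

Lemma exists_slack_in_Ftilde u : 0 < eps ->
  exists2 z, enorm z <= enorm (t u) &
    slab a (fun i => edot (t u) (w i)) (enorm (t u) * (eps / 240)) z.
Proof.
move=> eps_gt0; apply: exists_slack_point Pi_dist _ => //; first exact: secantsN.
by rewrite divr_ge0 // ltW.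
Qed.

Lemma beta_min_norm u : 0 < eps ->
  is_min_norm (F u) (beta u) /\ enorm (beta u) <= enorm (t u).
Proof.
move=> eps_gt0; have [zh zh_le zh_slab] := exists_slack_in_Ftilde u eps_gt0.
have F_zh : F u zh.
  rewrite FtildeE => i; apply: le_trans (zh_slab i) _.
  by rewrite mulrC ler_wpM2r ?enorm_ge0 //; lra.
have [b b_min] : exists b, is_min_norm (F u) b.
  by apply: exists_min_norm F_zh; rewrite FtildeE; exact: closed_slab.
have beta_min : is_min_norm (F u) (beta u) by apply: xgetPex; exists b.
by split => //; apply: le_trans zh_le; apply: beta_min.2.
Qed.

(* Move [beta u] a fraction [lam] of the way to the slack point of [u]: the
   slack absorbs the shift of the constraints from [t u] to [t v]. *)
Lemma beta_perturb u v (e : R) : 0 < eps < 1 -> 0 < enorm (t u) ->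
  enorm (t v - t u) <= e -> 50 * e <= eps * enorm (t u) ->
  exists2 p, F v p & enorm (p - beta u) <= 100 * e / eps.
Proof.
case/andP => eps_gt0 eps_lt1 Tu_gt0 tvu e_le; set T := enorm (t u) in Tu_gt0 e_le *.
have [zh zh_le zh_slab] := exists_slack_in_Ftilde u eps_gt0.
have [[Fb _] b_le] := beta_min_norm u eps_gt0.
have e0 : 0 <= e := le_trans (enorm_ge0 _) tvu.
have eT_gt0 : 0 < eps * T by rewrite mulr_gt0.
pose lam := 50 * e / (eps * T).
have lamE : lam * (eps * T) = 50 * e by rewrite /lam divfK ?gt_eqF.
have lam0 : 0 <= lam by rewrite /lam divr_ge0 // ?mulr_ge0 // ltW.
have lam1 : lam <= 1 by rewrite /lam ler_pdivrMr // mul1r.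
exists (beta u + lam *: (zh - beta u)).
  rewrite FtildeE; rewrite FtildeE in Fb.
  apply: (slab_mix (e := e)) Fb zh_slab _ _ _ => [i||].
  - by rewrite -edotBl; apply: le_trans (abs_edot_secant_le _ (X_w i)) tvu.
  - by rewrite lam0 lam1.
  apply: (perturbation_budget eps_gt0 eps_lt1 e0 lamE).
  rewrite lerBlDr -lerBlDl; apply: le_trans (lerB_enorm _ _) _.
  by rewrite enormBC.
rewrite addrC addKr enormZ ger0_norm //.
apply: le_trans (ler_wpM2l lam0 (ler_enormB _ _)) _.
have -> : 100 * e / eps = lam * (2 * T) by rewrite /lam; field; rewrite !gt_eqF.
by rewrite ler_wpM2l //; move: zh_le b_le; rewrite -/T; lra.
Qed.

End Beta.

(* Only the [128 * sqrt T] branch of the maximum is needed. *)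
Lemma holder_constant_bound (R : realType) (eps T s N : R) :
  0 < eps < 1 -> 0 <= s -> 480 * s < eps * T -> 0 <= N ->
  N ^+ 2 <= 10 * (300 * s / eps) ^+ 2 + 8 * (300 * s / eps) * T ->
  N <= eps^-1 * Num.max 1200 (480 + 128 * Num.sqrt T) * Num.sqrt s.
Proof.
case/andP => eps_gt0 eps_lt1 s0 sT N0; set ie := eps^-1; rewrite -/(300 * s * ie).
have ie1 : 1 <= ie by rewrite /ie invf_ge1 // ltW.
have ieE : eps * ie = 1 by rewrite /ie mulfV // gt_eqF.
have T0 : 0 <= T by nra.
have DT : 300 * s * ie <= T by nra.
have [sqT sqs] := (sqr_sqrtr T0, sqr_sqrtr s0).
have [sqT0 sqs0] := (sqrtr_ge0 T, sqrtr_ge0 s).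
move=> hN; apply: (@le_trans _ _ (128 * ie * Num.sqrt T * Num.sqrt s)).
  rewrite -ler_sqr ?nnegrE ?mulr_ge0 ?(le_trans ler01 ie1) //.
  rewrite !exprMn sqT sqs; rewrite !expr2 in hN *.
  have ie0 : 0 <= ie := le_trans ler01 ie1.
  have : 0 <= s * T * (ie * ie - ie) by rewrite !mulr_ge0 // subr_ge0 ler_peMr.
  have : 0 <= s * T * ie by rewrite !mulr_ge0.
  have : 0 <= 300 * s * ie * (T - 300 * s * ie) by rewrite !mulr_ge0 ?ler0n ?subr_ge0.
  lra.
apply: (ler_wpM2r sqs0); rewrite [128 * ie]mulrC -mulrA ler_wpM2l ?(le_trans ler01 ie1) //.
by rewrite le_max; apply/orP; right; lra.
Qed.

Lemma off_closure_margin (R : realType) (eps s T Tv : R) :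
  0 < eps < 1 -> 0 <= s -> 480 * s < eps * T -> T - 3 * s <= Tv ->
  [/\ 50 * (3 * s) <= eps * T, 0 < Tv & 50 * (3 * s) <= eps * Tv].
Proof.
case/andP => eps_gt0 eps_lt1 s0 sT TvT.
have epsTv : 477 * s < eps * Tv.
  have := ler_wpM2l (ltW eps_gt0) TvT; have : eps * s <= s by rewrite ler_piMl // ltW.
  lra.
split; [lra | | lra].
by rewrite -(pmulr_rgt0 _ eps_gt0); lra.
Qed.

Section Holder.
Variables (R : realType) (d m l : nat) (X : set 'rV[R]_d) (Pi : 'M[R]_(d, m))
  (eps : R) (w : 'I_l -> 'rV[R]_d).
Hypothesis X_w : forall i, secants X (w i).
Hypothesis Pi_dist : convex_hull_distortion Pi (eps / 240) (secants X).

Local Notation t u := (u - nn X u).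
Local Notation beta := (beta X Pi eps w).

Lemma Ftilde_convex u : convex_rV (Ftilde X Pi eps w u).
Proof. by rewrite FtildeE; exact: slab_convex. Qed.

Lemma beta_holder_on_closure u v : 0 < eps -> Xtilde X u -> Xtilde X v ->
  eclosure X u -> enorm (u - v) < 1 ->
  enorm (beta u - beta v) <= 3 * Num.sqrt (enorm (u - v)).
Proof.
move=> eps_gt0 Xu Xv clu uv1; set s := enorm (u - v) in uv1 *.
have [[_ bu_le] [_ bv_le]] := (beta_min_norm X_w Pi_dist u eps_gt0,
                               beta_min_norm X_w Pi_dist v eps_gt0).
have Tu0 : enorm (t u) <= 0.
  by have := (nn_closest Xu).2 _ clu; rewrite subrr enorm0.
have Tv_le : enorm (t v) <= s by rewrite /s (enormBC u); exact: (nn_closest Xv).2.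
have s0 : 0 <= s := enorm_ge0 _.
have sqs0 := sqrtr_ge0 s.
have s_le_sqs : s <= Num.sqrt s.
  have sqs1 : Num.sqrt s <= 1 by rewrite -sqrtr1 ler_sqrt // ltW.
  by rewrite -{1}(sqr_sqrtr s0) expr2 ler_piMr.
apply: le_trans (ler_enormB _ _) _.
apply: le_trans (lerD (le_trans bu_le Tu0) (le_trans bv_le Tv_le)) _.
by rewrite add0r (le_trans s_le_sqs) // ler_peMl // ler1n.
Qed.

Lemma beta_holder_off_closure u v : 0 < eps < 1 -> 0 < enorm (t u) ->
  enorm (nn X u - nn X v) <= 2 * enorm (u - v) ->
  480 * enorm (u - v) < eps * enorm (t u) ->
  enorm (beta u - beta v)
    <= eps^-1 * Num.max 1200 (480 + 128 * Num.sqrt (enorm (t u)))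
         * Num.sqrt (enorm (u - v)).
Proof.
move=> /[dup] eps01 /andP[eps_gt0 eps_lt1] Tu_gt0 nn_lip sT.
have s0 := enorm_ge0 (u - v).
have tvu : enorm (t v - t u) <= 3 * enorm (u - v).
  have -> : t v - t u = (v - u) - (nn X v - nn X u).
    by rewrite !opprB addrACA [in RHS]addrACA (addrC (- nn X v)).
  apply: le_trans (ler_enormB _ _) _; rewrite (enormBC v) (enormBC (nn X v)).
  have -> : 3 * enorm (u - v) = enorm (u - v) + 2 * enorm (u - v) by ring.
  by rewrite lerD2l.
have Tv : enorm (t u) - 3 * enorm (u - v) <= enorm (t v).
  rewrite lerBlDr -lerBlDl; apply: le_trans (lerB_enorm _ _) _.
  by rewrite enormBC.
have [margin_u Tv_gt0 margin_v] := off_closure_margin eps01 s0 sT Tv.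
have [p Fvp pb] := beta_perturb X_w Pi_dist eps01 Tu_gt0 tvu margin_u.
have tuv : enorm (t u - t v) <= 3 * enorm (u - v) by rewrite enormBC.
have [q Fuq qb] := beta_perturb X_w Pi_dist eps01 Tv_gt0 tuv margin_v.
have [[bu_min bu_le] [bv_min _]] := (beta_min_norm X_w Pi_dist u eps_gt0,
                                     beta_min_norm X_w Pi_dist v eps_gt0).
have := min_norm_stable (@Ftilde_convex v) bu_min bv_min Fvp Fuq pb qb.
rewrite (_ : 100 * (3 * enorm (u - v)) / eps = 300 * enorm (u - v) / eps); last by ring.
move=> stable; apply: holder_constant_bound => //; first exact: enorm_ge0.
have D0 : 0 <= 8 * (300 * enorm (u - v) / eps).
  by rewrite mulr_ge0 ?ler0n ?divr_ge0 ?mulr_ge0 ?ler0n ?(ltW eps_gt0).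
exact: le_trans stable (lerD (lexx _) (ler_wpM2l D0 bu_le)).
Qed.

End Holder.

Unset Implicit Arguments.

Theorem lemma4p1 (R : realType) (d m l : nat) (X : set 'rV[R]_d)
  (eps : R) (w : 'I_l -> 'rV[R]_d) (Pi : 'M[R]_(d, m))
  (Hreach : (0 < reach X)%E)
  (Hnn : forall u v, Xtilde X u -> Xtilde X v ->
           enorm (nn X u - nn X v) <= 2 * enorm (u - v))
  (Heps : 0 < eps < 1)
  (Hw : forall i, secants X (w i))
  (Hnet : forall v, secants X v -> exists i, enorm (v - w i) < eps / 40)
  (HPi : convex_hull_distortion Pi (eps / 240) (secants X))
  (HF : forall u, Xtilde X u -> exists z, Ftilde X Pi eps w u z)
  (u : 'rV[R]_d) (Hu : Xtilde X u) :
  (eclosure X u ->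
     forall v, enorm (u - v) < 1 -> Xtilde X v ->
       enorm (beta X Pi eps w u - beta X Pi eps w v)
         <= 3 * Num.sqrt (enorm (u - v))) /\
  (~ eclosure X u ->
     let r_u := Num.min 1 (eps * enorm (u - nn X u) / 480) in
     let C_u := eps^-1 * Num.max 1200 (480 + 128 * Num.sqrt (enorm (u - nn X u))) in
     forall v, enorm (u - v) < r_u -> Xtilde X v ->
       enorm (beta X Pi eps w u - beta X Pi eps w v)
         <= C_u * Num.sqrt (enorm (u - v))).
Proof.
have eps_gt0 : 0 < eps by case/andP: Heps.
split=> [clu v uv1 Xv | nclu r_u C_u v uv_r Xv].
  exact: (beta_holder_on_closure Hw HPi eps_gt0 Hu Xv clu uv1).
have Tu_gt0 : 0 < enorm (u - nn X u).
  apply: enorm_gt0; rewrite subr_eq0; apply: contra_notN nclu => /eqP ->.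
  exact: (nn_closest Hu).1.
move: uv_r; rewrite /r_u lt_min => /andP[_ uv_r].
apply: (beta_holder_off_closure Hw HPi Heps Tu_gt0 (Hnn _ _ Hu Xv)).
by move: uv_r; rewrite ltr_pdivlMr ?ltr0n // mulrC.
Qed.
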